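(* Let $\mathrm{M}$ be a (loopless) matroid of rank $d+1$. For every $J\subseteq[d]$, $N_J(\mathrm{U}_{d+1})\le N_J(\mathrm{M})$.
   Context: $\mathrm{U}_{d+1}$ is the Boolean matroid on $d+1$ elements. For $J=\{j_1<\cdots<j_m\}\subseteq[d]=\{1,\dots,d\}$, $N_J(\mathrm{M})$ is the number of chains of flats $G_1\subsetneq\cdots\subsetneq G_m$ of $\mathrm{M}$ with $\operatorname{rk}(G_\ell)=j_\ell$ for all $\ell$. *)

From mathcomp Require Import all_boot.
Set Implicit Arguments. Unset Strict Implicit. Unset Printing Implicit Defensive.

Definition matroid_rank (T : finType) (r : {set T} -> nat) : Prop :=
  [/\ forall A : {set T}, r A <= #|A|,
      forall A B : {set T}, A \subset B -> r A <= r B &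
      forall A B : {set T}, r (A :|: B) + r (A :&: B) <= r A + r B].

Definition loopless (T : finType) (r : {set T} -> nat) : Prop :=
  forall x : T, r [set x] = 1.

Definition flat (T : finType) (r : {set T} -> nat) (F : {set T}) : bool :=
  [forall x, (x \notin F) ==> (r F < r (x |: F))].

(* A subset J = {j_1 < ... < j_m} of [d] is represented by its increasing
   enumeration [:: j_1; ...; j_m]. *)
Definition subset_of_range (d : nat) (J : seq nat) : Prop :=
  sorted ltn J /\ all (fun j => 0 < j <= d) J.

Definition flag_chain (T : finType) (r : {set T} -> nat) (J : seq nat)
  (G : (size J).-tuple {set T}) : bool :=
  [forall i : 'I_(size J),
     flat r (tnth G i) && (r (tnth G i) == nth 0 J i)] &&
  [forall i : 'I_(size J),
     (i.+1 < size J) ==> (nth set0 G i \proper nth set0 G i.+1)].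

Definition N_J (T : finType) (r : {set T} -> nat) (J : seq nat) : nat :=
  #|[set G : (size J).-tuple {set T} | @flag_chain T r J G]|.

Definition boolean_rank (n : nat) (A : {set 'I_n}) : nat := #|A|.

(* Choose a basis B of M; it has d + 1 elements.  Sending a subset S of
   [d + 1] (identified with B) to the closure of S gives a rank-preserving,
   inclusion-preserving map from the Boolean lattice into the flats of M, and
   it is injective because cl(S) meets B exactly in S (S being independent).
   Injectivity and monotonicity make it preserve strict inclusions, so it maps
   the flag chains of U_{d+1} of type J injectively to flag chains of M. *)

From mathcomp Require Import all_boot.
From mathcomp Require Import zify.

Set Implicit Arguments.
Unset Strict Implicit.
Unset Printing Implicit Defensive.

Section MatroidClosure.
Variables (T : finType) (r : {set T} -> nat).
Hypothesis hr : matroid_rank r.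

Let rank_le_card (A : {set T}) : r A <= #|A|. Proof. by case: hr. Qed.
Let rankS (A B : {set T}) : A \subset B -> r A <= r B.
Proof. by case: hr => _ + _; apply. Qed.
Let rank_submod (A B : {set T}) : r (A :|: B) + r (A :&: B) <= r A + r B.
Proof. by case: hr. Qed.

Definition mclosure (S : {set T}) : {set T} := [set x | r (x |: S) == r S].

Lemma sub_mclosure (S : {set T}) : S \subset mclosure S.
Proof. by apply/subsetP => x xS; rewrite inE (setUidPr _) // sub1set. Qed.

Lemma rank_setU1_eq (x : T) (S S' : {set T}) :
  S \subset S' -> r (x |: S) = r S -> r (x |: S') = r S'.
Proof.
move=> sSS' rxS.
have := rank_submod (x |: S) S'.
rewrite -setUA (setUidPr sSS').
have : r S <= r ((x |: S) :&: S') by apply: rankS; rewrite subsetI subsetUr.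
have : r S' <= r (x |: S') by apply: rankS; apply: subsetUr.
lia.
Qed.

Lemma mclosureS (S S' : {set T}) : S \subset S' -> mclosure S \subset mclosure S'.
Proof.
by move=> sSS'; apply/subsetP => x; rewrite !inE => /eqP /(rank_setU1_eq sSS') ->.
Qed.

Lemma rank_setU_closed (S A : {set T}) : A \subset mclosure S -> r (S :|: A) = r S.
Proof.
suff rank_seq (s : seq T) : {subset s <= mclosure S} -> r (S :|: [set x in s]) = r S.
  move=> sAS; rewrite -(set_enum A); apply: rank_seq => x.
  by rewrite mem_enum => /(subsetP sAS).
elim: s => [|y s IHs] sub_s.
  by congr r; apply/setP => z; rewrite !inE orbF.
have -> : S :|: [set x in y :: s] = y |: (S :|: [set x in s]).
  by apply/setP => z; rewrite !inE orbCA.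
rewrite (@rank_setU1_eq y S) ?subsetUl //; last first.
  by apply/eqP; move: (sub_s y (mem_head y s)); rewrite inE.
by apply: IHs => z zs; apply: sub_s; rewrite inE zs orbT.
Qed.

Lemma rank_mclosure (S : {set T}) : r (mclosure S) = r S.
Proof. by rewrite -{1}(setUidPr (sub_mclosure S)) rank_setU_closed. Qed.

Lemma mclosure_flat (S : {set T}) : flat r (mclosure S).
Proof.
apply/forallP => x; apply/implyP; rewrite inE rank_mclosure => /eqP rxS.
have : r S <= r (x |: S) by apply: rankS; apply: subsetUr.
have : r (x |: S) <= r (x |: mclosure S) by apply/rankS/setUS/sub_mclosure.
lia.
Qed.

Lemma indep_subset (B S : {set T}) : r B = #|B| -> S \subset B -> r S = #|S|.
Proof.
move=> rB sSB.
have := rank_submod S (B :\: S).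
rewrite {1}setDE setUIr setUCr setIT (setUidPr sSB) rB.
have := rank_le_card S; have := rank_le_card (B :\: S); rewrite cardsDS //.
have := subset_leq_card sSB; lia.
Qed.

Lemma mclosure_indepI (B S : {set T}) :
  r B = #|B| -> S \subset B -> mclosure S :&: B = S.
Proof.
move=> rB sSB; apply/setP => x; rewrite inE.
have [xS | xNS] := boolP (x \in S).
  by rewrite (subsetP (sub_mclosure S)) // (subsetP sSB).
case: (boolP (x \in B)) => xB; rewrite ?andbF // andbT inE.
rewrite (indep_subset rB sSB) (indep_subset rB (S := x |: S)); last first.
  by rewrite subUset sub1set xB.
by rewrite cardsU1 xNS; apply/negbTE; lia.
Qed.

Lemma exists_basis : exists2 B : {set T}, r B = #|B| & r B = r [set: T].
Proof.
have indep0 : r set0 == #|@set0 T|.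
  by have := rank_le_card set0; rewrite cards0 leqn0.
have [I /eqP rI maxI] :=
  @arg_maxnP _ set0 (fun I => r I == #|I|) (fun I => #|I|) indep0.
exists I => //; rewrite -(setUT I) rank_setU_closed //.
apply/subsetP => x _; rewrite inE; have [xI | xNI] := boolP (x \in I).
  by rewrite (setUidPr _) // sub1set.
have : r (x |: I) <= #|x |: I| := rank_le_card _.
have : r (x |: I) != #|x |: I| by apply/negP => /maxI; rewrite cardsU1 xNI; lia.
have : r I <= r (x |: I) by apply/rankS/subsetUr.
rewrite cardsU1 xNI; lia.
Qed.

Lemma boolean_flat_embedding (n : nat) : r [set: T] = n ->
  exists phi : {set 'I_n} -> {set T},
    [/\ injective phi, {homo phi : A B / A \subset B},
        forall A, flat r (phi A) & forall A, r (phi A) = #|A|].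
Proof.
move=> rT; have [B rB rBT] := exists_basis.
have cardB : #|B| = n by rewrite -rB rBT.
pose f (i : 'I_n) : T := enum_val (cast_ord (esym cardB) i).
have f_inj : injective f by move=> i j /enum_val_inj /cast_ord_inj.
have fB (A : {set 'I_n}) : f @: A \subset B.
  by apply/subsetP => _ /imsetP [i _ ->]; apply: enum_valP.
exists (fun A : {set 'I_n} => mclosure (f @: A)); split.
- move=> A A' eqA; apply: (imset_inj f_inj).
  by rewrite -(mclosure_indepI rB (fB A)) -(mclosure_indepI rB (fB A')) eqA.
- by move=> A A' sAA'; apply/mclosureS/imsetS.
- by move=> A; apply: mclosure_flat.
- by move=> A; rewrite rank_mclosure (indep_subset rB (fB A)) card_imset.
Qed.

End MatroidClosure.

Lemma N_J_leq_flat_embedding (T1 T2 : finType) (r1 : {set T1} -> nat)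
    (r2 : {set T2} -> nat) (phi : {set T1} -> {set T2}) (J : seq nat) :
  injective phi -> {homo phi : A B / A \subset B} ->
  (forall A, flat r2 (phi A)) -> (forall A, r2 (phi A) = r1 A) ->
  N_J r1 J <= N_J r2 J.
Proof.
move=> phi_inj phiS phi_flat r_phi.
have map_inj : injective (fun G : (size J).-tuple {set T1} => map_tuple phi G).
  by move=> G1 G2 /(congr1 val) /= /(inj_map phi_inj) /val_inj.
rewrite /N_J -(card_imset _ map_inj); apply/subset_leq_card/subsetP => G'.
case/imsetP=> G; rewrite !inE => /andP [/forallP G_ranks /forallP G_proper] ->.
apply/andP; split; apply/forallP => i.
  by rewrite tnth_map phi_flat r_phi; case/andP: (G_ranks i).
apply/implyP => iS; move/implyP/(_ iS): (G_proper i).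
have sizeG : size G = size J by rewrite size_tuple.
rewrite /= !(nth_map set0) ?sizeG // !properEneq => /andP [neqG sG].
by rewrite (inj_eq phi_inj) neqG phiS.
Qed.

Theorem lemma4p13 (d : nat) (T : finType) (r : {set T} -> nat) (J : seq nat) :
  matroid_rank r -> loopless r -> r [set: T] = d.+1 ->
  subset_of_range d J ->
  N_J (@boolean_rank d.+1) J <= N_J r J.
Proof.
move=> hr _ rT _.
have [phi [phi_inj phiS phi_flat r_phi]] := boolean_flat_embedding hr rT.
exact: N_J_leq_flat_embedding phi_inj phiS phi_flat r_phi.
Qed.
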